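(* Let $\mathcal N$ be a network with a binary collision profile and character $D^*$. For every integer $T\ge\max(D^*,1)$, $\mathcal R^{(\mathcal M_T,\mathcal E_T)}\subseteq\mathcal R^{\mathcal N}$ (and hence, together with $\mathcal R^{\mathcal N}\subseteq\mathcal R^{(\mathcal M_T,\mathcal E_T)}$, equality holds).
   Context: A network is a triple $\mathcal N=(\mathcal L,\mathcal I,D_{\mathcal L})$ where $\mathcal L$ is a finite nonempty set of links, each $\mathcal I(l)$ is a collection of nonempty subsets of $\mathcal L$, and $D_{\mathcal L}$ assigns an integer $D_{\mathcal L}(l,l')$ to every pair with $l'\in\phi$ for some $\phi\in\mathcal I(l)$. The profile is binary if every $\phi\in\mathcal I(l)$ is a singleton. The character is $D^*=\max_{l}\max_{\phi\in\mathcal I(l)}\max_{l'\in\phi}|D_{\mathcal L}(l,l')|$ (0 if there are no collision sets). A schedule is a map $S:\mathcal L\times\mathbb Z\to\{0,1\}$; $S(l,t)$ has a collision if there is $\phi\in\mathcal I(l)$ with $S(l',t+D_{\mathcal L}(l,l'))=1$ for all $l'\in\phi$; $S$ is collision free if no $(l,t)$ with $S(l,t)=1$ has a collision. $R_S(l)=\lim_{T\to\infty}\frac1T\sum_{t=0}^{T-1}\iota\big(S(l,t)=1\text{ and collision free}\big)$ when it exists; $R_S=(R_S(l))_l$. A nonnegative vector $R\in[0,\infty)^{\mathcal L}$ is achievable if for every $\epsilon>0$ some schedule $S$ has a rate vector with $R_S(l)\ge R(l)-\epsilon$ for all $l$; $\mathcal R^{\mathcal N}$ is the set of achievable nonnegative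 vectors. $S[T,k]$ is the $|\mathcal L|\times T$ binary matrix with $S[T,k](l,j)=S(l,kT+j)$. The scheduling graph $(\mathcal M_T,\mathcal E_T)$ has vertex set $\mathcal M_T$ = all $|\mathcal L|\times T$ binary matrices $A$ with $A=S[T,0]$ for some collision-free schedule $S$, and edge set $\mathcal E_T$ = all pairs $(A,B)$ with $A=S[T,0]$, $B=S[T,1]$ for some collision-free $S$. A cycle is a sequence $(A_0,\dots,A_k)$, $k\ge1$, with $(A_i,A_{i+1})\in\mathcal E_T$, $A_k=A_0$, and $A_0,\dots,A_{k-1}$ pairwise distinct; its rate vector is $R_C=\frac{1}{kT}\sum_{i=0}^{k-1}A_i\mathbf 1$. $\mathcal R^{(\mathcal M_T,\mathcal E_T)}$ is the convex hull of the rate vectors of all cycles. *)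

From HB Require Import structures.
From mathcomp Require Import all_boot all_order all_algebra.
From mathcomp Require Import all_classical all_reals all_analysis.
Set Implicit Arguments. Unset Strict Implicit. Unset Printing Implicit Defensive.
Import Order.TTheory GRing.Theory Num.Theory numFieldNormedType.Exports.
Local Open Scope ring_scope.
Local Open Scope classical_set_scope.

(* A network over a finite type of links L:
   coll l = the collection I(l) of (nonempty) collision sets of link l,
   delay l l' = D_L(l,l') (a total function; only values with l' in some
   phi in I(l) are ever used). *)
Record network (L : finType) := Network {
  coll : L -> {set {set L}} ;
  delay : L -> L -> int ;
  coll_nonempty : forall l phi, phi \in coll l -> phi != finset.set0 }.

Definition binary_profile (L : finType) (N : network L) : Prop :=
  forall l phi, phi \in coll N l -> #|phi| = 1%N.

(* character D^* (0 if there are no collision sets) *)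
Definition character (L : finType) (N : network L) : nat :=
  \max_(l : L) \max_(phi in coll N l) \max_(l' in phi) `|delay N l l'|%N.

Definition schedule (L : finType) := L -> int -> bool.

Definition has_collision (L : finType) (N : network L) (S : schedule L)
  (l : L) (t : int) : bool :=
  [exists phi in coll N l, [forall l' in phi, S l' (t + delay N l l')]].

Definition collision_free (L : finType) (N : network L) (S : schedule L) : Prop :=
  forall l t, S l t -> ~~ has_collision N S l t.

Definition success (L : finType) (N : network L) (S : schedule L)
  (l : L) (t : int) : bool := S l t && ~~ has_collision N S l t.

Definition avg_success (R : realType) (L : finType) (N : network L)
  (S : schedule L) (l : L) (n : nat) : R :=
  (\sum_(t < n) ((success N S l (nat_of_ord t)%:Z : nat)%:R : R)) / n%:R.

Definition has_rate (R : realType) (L : finType) (N : network L)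
  (S : schedule L) (l : L) (r : R) : Prop :=
  avg_success R N S l @ \oo --> r.

Definition achievable (R : realType) (L : finType) (N : network L)
  (Rv : L -> R) : Prop :=
  forall eps : R, 0 < eps -> exists S : schedule L,
    forall l, exists r, has_rate N S l r /\ Rv l - eps <= r.

Definition achievable_region (R : realType) (L : finType) (N : network L)
  : set (L -> R) :=
  [set Rv | (forall l, 0 <= Rv l) /\ achievable N Rv].

Definition bmat (L : finType) (T : nat) := {ffun L * 'I_T -> bool}.

Definition block (L : finType) (S : schedule L) (T k : nat) : bmat L T :=
  [ffun p : L * 'I_T => S p.1 ((k * T + nat_of_ord p.2)%N)%:Z].

Definition sg_vertex (L : finType) (N : network L) (T : nat) (A : bmat L T) : Prop :=
  exists S : schedule L, collision_free N S /\ block S T 0 = A.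

Definition sg_edge (L : finType) (N : network L) (T : nat) (A B : bmat L T) : Prop :=
  exists S : schedule L, collision_free N S /\ block S T 0 = A /\ block S T 1 = B.

Definition sg_cycle (L : finType) (N : network L) (T k : nat)
  (A : nat -> bmat L T) : Prop :=
  [/\ (1 <= k)%N,
      (forall i, (i < k)%N -> sg_edge N (A i) (A i.+1)),
      A k = A 0%N &
      (forall i j, (i < k)%N -> (j < k)%N -> A i = A j -> i = j)].

Definition cycle_rate (R : realType) (L : finType) (T k : nat)
  (A : nat -> bmat L T) : L -> R :=
  fun l => (k * T)%:R^-1 *
    \sum_(i < k) \sum_(j < T) ((A (nat_of_ord i) (l, j) : nat)%:R : R).

Definition cvx_hull (R : realType) (L : finType) (X : set (L -> R)) : set (L -> R) :=
  [set x | exists (n : nat) (lam : 'I_n -> R) (v : 'I_n -> L -> R),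
     [/\ (forall i, 0 <= lam i), \sum_(i < n) lam i = 1,
         (forall i, X (v i)) & x = (fun l => \sum_(i < n) lam i * v i l)]].

Definition graph_region (R : realType) (L : finType) (N : network L) (T : nat)
  : set (L -> R) :=
  cvx_hull [set v | exists (k : nat) (A : nat -> bmat L T),
                      sg_cycle N k A /\ v = cycle_rate R k A].

From mathcomp Require Import all_boot all_order all_algebra.
From mathcomp Require Import all_classical all_reals all_analysis.
From mathcomp Require Import zify ring lra.
Set Implicit Arguments. Unset Strict Implicit. Unset Printing Implicit Defensive.
Import Order.TTheory GRing.Theory Num.Theory numFieldNormedType.Exports.
Local Open Scope classical_set_scope.
Local Open Scope ring_scope.

(* A walk B_0 B_1 B_2 ... in the scheduling graph can be glued into a
   single schedule, the j-th block of T slots being B_j.  With a binary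
   profile, a collision of (l, t) is witnessed by one link l' at time
   t + D(l, l'), and |D(l, l')| <= D* <= T, so both times lie in two
   consecutive blocks B_m B_(m+1); the collision-free schedule witnessing the
   edge (B_m, B_(m+1)) then exhibits the same collision, a contradiction
   ([glue_collision_free]).  Repeating a closed walk periodically therefore
   gives a collision-free periodic schedule whose rate is the average number
   of transmissions per slot along the walk ([walk_sched_rate], via the
   convergence of averages of periodic sequences).  The empty block Z is
   joined to and from every vertex, so cycles C_i may be concatenated through
   Z: the closed walk Z C_0^(m_0) Z C_1^(m_1) Z ... Z ([frame]) has rate
   sum_i m_i k_i R_(C_i) / (1 + sum_i (m_i k_i + 1)) ([frame_rate]).  Finally,
   for convex weights lam_i one can choose repetition counts m_i making this
   ratio exceed sum_i lam_i R_(C_i) - eps uniformly in the rate vectors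
   ([repetition_counts]); this yields the theorem. *)

Section SchedulingGraph.
Variables (L : finType) (N : network L).

Lemma collision_free_shift (S S' : schedule L) (c : int) :
  collision_free N S -> (forall l t, S' l t -> S l (t - c)) ->
  collision_free N S'.
Proof.
move=> cfS sub l t /sub St; apply/negP => /existsP[phi /andP[phi_in /forallP hphi]].
move/negP: (cfS l _ St); apply; apply/existsP; exists phi; rewrite phi_in /=.
apply/forallP => l'; apply/implyP => l'_in.
by rewrite -addrAC; apply: sub; exact: (implyP (hphi l')).
Qed.

Lemma success_collision_free (S : schedule L) l t :
  collision_free N S -> success N S l t = S l t.
Proof.
by move=> cfS; rewrite /success; case St: (S l t); rewrite ?(negbTE (cfS l t St)).
Qed.

Definition zero_block (T : nat) : bmat L T := [ffun _ => false].

Lemma sg_vertex_zero T : sg_vertex N (zero_block T).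
Proof.
by exists (fun _ _ => false); split=> //; apply/ffunP => -[l j]; rewrite !ffunE.
Qed.

Lemma sg_edge_vertex T (X Y : bmat L T) : sg_edge N X Y -> sg_vertex N X.
Proof. by case=> S [cfS [SX _]]; exists S. Qed.

Lemma sg_edge_to_zero T (X : bmat L T) : sg_vertex N X -> sg_edge N X (zero_block T).
Proof.
case=> S [cfS <-]; exists (fun l t => (0 <= t < T%:Z) && S l t); split.
  by apply: (collision_free_shift (c := 0) cfS) => l t /andP[_]; rewrite subr0.
split; apply/ffunP => -[l j]; rewrite !ffunE /= ltz_nat.
  by rewrite mul0n add0n ltn_ord.
by rewrite mul1n; have -> : (T + j < T)%N = false by lia.
Qed.

Lemma sg_edge_from_zero T (Y : bmat L T) : sg_vertex N Y -> sg_edge N (zero_block T) Y.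
Proof.
case=> S [cfS <-]; exists (fun l t => (T%:Z <= t) && S l (t - T%:Z)); split.
  by apply: (collision_free_shift (c := T%:Z) cfS) => l t /andP[_].
split; apply/ffunP => -[l j]; rewrite !ffunE /= lez_nat.
  by have -> : (T <= 0 * T + j)%N = false by have := ltn_ord j; lia.
rewrite mul1n leq_addr /=; congr (S l _).
by rewrite mul0n add0n PoszD addrAC subrr add0r.
Qed.

End SchedulingGraph.

Lemma common_window (T n u : nat) : (0 < T)%N -> (n <= u + T)%N -> (u <= n + T)%N ->
  exists m, [/\ (m * T <= n < m.+2 * T)%N & (m * T <= u < m.+2 * T)%N].
Proof.
move=> T_gt0 nu un; exists (minn n u %/ T)%N.
have := divn_eq (minn n u) T; have := ltn_pmod (minn n u) T_gt0.
rewrite !mulSn; split; apply/andP; split; lia.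
Qed.

Section Glue.
Variables (L : finType) (N : network L) (T : nat).
Hypothesis T_gt0 : (0 < T)%N.

Definition glue (Bs : nat -> bmat L T) : schedule L :=
  fun l t => if t is Posz n then Bs (n %/ T)%N (l, Ordinal (ltn_pmod n T_gt0)) else false.

Lemma glue_nat Bs l (m : nat) (j : 'I_T) : glue Bs l (m * T + j)%N = Bs m (l, j).
Proof.
rewrite /glue divnMDl // divn_small // addn0; congr (Bs _ (l, _)).
by apply: val_inj; rewrite /= modnMDl modn_small.
Qed.

Lemma glue_periodic Bs s : (forall j, Bs j = Bs (j %% s)%N) ->
  forall l (t : nat), glue Bs l t = glue Bs l (t %% (s * T))%N.
Proof.
move=> Bs_per l t; rewrite /glue.
have -> : Ordinal (ltn_pmod (t %% (s * T)) T_gt0) = Ordinal (ltn_pmod t T_gt0).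
  by apply: val_inj; rewrite /= modn_dvdm // dvdn_mull.
by rewrite -modn_divl -Bs_per.
Qed.

Lemma glue_window Bs (S : schedule L) m l (x : nat) :
  block S T 0 = Bs m -> block S T 1 = Bs m.+1 -> (m * T <= x < m.+2 * T)%N ->
  glue Bs l x = S l (x - m * T)%N.
Proof.
move=> S0 S1 /andP[lo hi]; have := divn_eq x T; have := ltn_pmod x T_gt0.
rewrite /glue; have [-> | ->] : (x %/ T = m \/ x %/ T = m.+1)%N.
  by rewrite -(leq_divRL _ _ T_gt0) in lo; rewrite -(ltn_divLR _ _ T_gt0) in hi; lia.
- by move=> _ xE; rewrite -S0 ffunE /=; congr (S l _); congr Posz; lia.
- move=> _ xE; rewrite -S1 ffunE /=; congr (S l _); congr Posz; rewrite !mulSn in hi *; lia.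
Qed.

Lemma delay_le_character l phi l' : phi \in coll N l -> l' \in phi ->
  (`|delay N l l'| <= character N)%N.
Proof.
move=> phi_in l'_in; apply: leq_trans (leq_bigmax l).
apply: leq_trans (leq_bigmax_cond _ phi_in).
exact: (leq_bigmax_cond _ l'_in).
Qed.

(* Gluing a walk of the scheduling graph yields a collision-free schedule:
   a binary collision involves two times at distance at most D* <= T, which
   fall in one window where the edge witness would collide as well. *)
Lemma glue_collision_free Bs : binary_profile N -> (character N <= T)%N ->
  (forall m, sg_edge N (Bs m) (Bs m.+1)) -> collision_free N (glue Bs).
Proof.
move=> bin charT edges l [n|//] Sn.
apply/negP => /existsP[phi /andP[phi_in /forallP hphi]].
have [l' phiE] := cards1P (introT eqP (bin _ _ phi_in)).
have l'_in : l' \in phi by rewrite phiE set11.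
have dT : (`|delay N l l'| <= T)%N := leq_trans (delay_le_character phi_in l'_in) charT.
move: (implyP (hphi l') l'_in); case Eu : (n%:Z + delay N l l') => [u|//] Su.
have [m [wn wu]] : exists m, [/\ (m * T <= n < m.+2 * T)%N & (m * T <= u < m.+2 * T)%N].
  by apply: common_window => //; lia.
have [S [cfS [S0 S1]]] := edges m.
have Sn' : S l (n - m * T)%N by rewrite -(glue_window l S0 S1 wn).
move/negP: (cfS _ _ Sn'); apply.
apply/existsP; exists phi; rewrite phi_in /=; apply/forallP => l0.
apply/implyP; rewrite phiE => /set1P ->.
suff -> : (n - m * T)%N%:Z + delay N l l' = (u - m * T)%N%:Z.
  by rewrite -(glue_window l' S0 S1 wu).
move: wn wu => /andP[? _] /andP[? _]; lia.
Qed.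

End Glue.

Section PeriodicAverage.
Variables (f : nat -> nat) (p : nat).
Hypotheses (p_gt0 : (0 < p)%N) (f_le1 : forall t, (f t <= 1)%N)
  (f_periodic : forall t, f t = f (t %% p)%N).

Let count n := (\sum_(0 <= t < n) f t)%N.

Lemma count_period_add r : count (p + r) = (count p + count r)%N.
Proof.
rewrite /count (@big_cat_nat _ _ _ p 0 (p + r) _ _ (leq0n p) (leq_addr r p)) /=.
congr (_ + _)%N.
rewrite -{1}(add0n p) big_addn addKn; apply: eq_bigr => t _.
by rewrite f_periodic modnDr -f_periodic.
Qed.

Lemma count_periods q r : count (q * p + r) = (q * count p + count r)%N.
Proof.
elim: q => [|q IH]; first by rewrite !mul0n.
by rewrite mulSn -addnA count_period_add IH mulSn addnA.
Qed.

Lemma count_le n : (count n <= n)%N.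
Proof.
rewrite -[X in (_ <= X)%N](card_ord n) -sum1_card /count big_mkord.
by apply: leq_sum => t _; exact: f_le1.
Qed.

Lemma count_error n :
  (count p * n <= p * count n + p * p)%N /\ (p * count n <= count p * n + p * p)%N.
Proof.
rewrite [in count n](divn_eq n p) count_periods.
have := count_le p; have := count_le (n %% p); have := ltn_pmod n p_gt0.
rewrite {1 3}(divn_eq n p); nia.
Qed.

Lemma periodic_average_cvg (R : realType) :
  (fun n => (\sum_(t < n) (f t)%:R : R) / n%:R) @ \oo -->
  ((\sum_(t < p) f t)%:R / p%:R : R).
Proof.
have sumE n : (\sum_(t < n) (f t)%:R : R) = (count n)%:R.
  by rewrite /count big_mkord natr_sum.
apply/cvgrPdist_le => e e_gt0; exists (Num.truncn (p%:R / e)).+1 => // n /= n_large.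
have p_le : p%:R <= e * n%:R :> R.
  rewrite -ler_pdivrMl // mulrC ltW //.
  by apply: lt_le_trans (truncnS_gt _) _; rewrite ler_nat.
have n_gt0 : (0 < n)%N by lia.
have err : `|(count p * n)%:R - (p * count n)%:R| <= (p * p)%:R :> R.
  have [up lo] := count_error n.
  by rewrite ler_distl lerBlDr -!natrD !ler_nat up lo.
have -> : (\sum_(t < p) f t)%N = count p by rewrite /count big_mkord.
rewrite sumE.
have -> : (count p)%:R / p%:R - (count n)%:R / n%:R =
    ((count p * n)%:R - (p * count n)%:R) / (p * n)%:R :> R.
  by rewrite !natrM; field; rewrite !pnatr_eq0 -!lt0n p_gt0 n_gt0.
rewrite normf_div normr_nat ler_pdivrMr ?ltr0n ?muln_gt0 ?p_gt0 //.
apply: (le_trans err); rewrite !natrM mulrA mulrAC.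
exact: ler_wpM2r.
Qed.

End PeriodicAverage.

Section CyclesOfRelation.
Variables (X : Type) (e : rel X).

Lemma cycle_nth_rel x0 c i : cycle e c -> (i < size c)%N ->
  e (nth x0 c i) (nth x0 c (i.+1 %% size c)).
Proof.
move=> cyc i_lt; move: cyc; rewrite (cycle_path x0) => /(pathP x0) step.
have [i_last | i_lt'] := eqVneq i.+1 (size c); last first.
  have iS : (i.+1 < size c)%N by rewrite ltn_neqAle i_lt' i_lt.
  by rewrite modn_small //; exact: (step i.+1 iS).
rewrite i_last modnn; move: (step 0%N (leq_ltn_trans (leq0n i) i_lt)) => /=.
by rewrite (last_nth x0) -i_last.
Qed.

Lemma mkseq_cycle (A : nat -> X) k : (0 < k)%N ->
  (forall i, (i < k)%N -> e (A i) (A i.+1)) -> A k = A 0%N -> cycle e (mkseq A k).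
Proof.
case: k => // k _ step Ak; rewrite (cycle_path (A 0%N)); apply/(pathP (A 0%N)) => i.
rewrite size_mkseq => i_lt; rewrite (nth_mkseq _ _ i_lt); case: i i_lt => [|i] i_lt.
  rewrite -[nth _ _ 0%N]/(last (A 0%N) (mkseq A k.+1)) -nth_last size_mkseq.
  by rewrite nth_mkseq // -Ak; exact: step.
rewrite -[nth _ _ i.+1]/(nth (A 0%N) (mkseq A k.+1) i) nth_mkseq ?(ltnW i_lt) //.
exact: step (ltnW i_lt).
Qed.

Lemma path_cycle_repeat x c m : cycle e c -> e x (head x c) ->
  path e x (flatten (nseq m c)).
Proof.
case: c => [|y c] cyc; first by elim: m.
move: cyc => /= /[dup] cyc; rewrite rcons_path => /andP[yc back].
elim: m x => [//|m IH] x xy /=.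
by rewrite cat_path /= xy yc /=; exact: IH.
Qed.

End CyclesOfRelation.

Section Walks.
Variables (L : finType) (N : network L) (T : nat).
Hypothesis T_gt0 : (0 < T)%N.
Local Notation Z := (zero_block L T).

Definition sg_rel : rel (bmat L T) := fun X Y => `[< sg_edge N X Y >].

Definition block_count (B : bmat L T) (l : L) : nat := (\sum_(j < T) B (l, j))%N.

Definition walk_count (w : seq (bmat L T)) (l : L) : nat :=
  (\sum_(B <- w) block_count B l)%N.

Definition walk_sched (w : seq (bmat L T)) : schedule L :=
  glue T_gt0 (fun j => nth Z w (j %% size w)).

Lemma walk_sched_collision_free w : (0 < size w)%N -> cycle sg_rel w ->
  binary_profile N -> (character N <= T)%N -> collision_free N (walk_sched w).
Proof.
move=> w_gt0 cyc bin charT; apply: glue_collision_free => // j.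
have /asboolP := cycle_nth_rel Z cyc (ltn_pmod j w_gt0).
by rewrite -addn1 modnDml addn1.
Qed.

Lemma sum_blocks (g : nat -> nat) s :
  (\sum_(t < s * T) g t = \sum_(b < s) \sum_(j < T) g (b * T + j))%N.
Proof.
elim: s => [|s IH]; first by rewrite mul0n !big_ord0.
by rewrite mulSnr big_split_ord [RHS]big_ord_recr /= IH.
Qed.

Lemma walk_sched_rate (R : realType) w l : (0 < size w)%N -> cycle sg_rel w ->
  binary_profile N -> (character N <= T)%N ->
  has_rate N (walk_sched w) l ((walk_count w l)%:R / (size w * T)%:R : R).
Proof.
move=> w_gt0 cyc bin charT.
have cf := walk_sched_collision_free w_gt0 cyc bin charT.
pose f t := success N (walk_sched w) l t%:Z : nat.
have fE t : f t = walk_sched w l t by rewrite /f success_collision_free.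
have p_gt0 : (0 < size w * T)%N by rewrite muln_gt0 w_gt0.
have f_le1 t : (f t <= 1)%N by rewrite fE leq_b1.
have f_per t : f t = f (t %% (size w * T))%N.
  by rewrite !fE /walk_sched (glue_periodic _ (s := size w)) // => j; rewrite modn_mod.
have := periodic_average_cvg (R := R) p_gt0 f_le1 f_per.
suff -> : (\sum_(t < size w * T) f t = walk_count w l)%N by [].
rewrite sum_blocks /walk_count (big_nth Z) big_mkord; apply: eq_bigr => b _.
by apply: eq_bigr => j _; rewrite fE /walk_sched glue_nat modn_small.
Qed.

Lemma walk_count_le w l : (walk_count w l <= size w * T)%N.
Proof.
rewrite /walk_count -sum1_size big_distrl /= mul1n; apply: leq_sum => B _.
rewrite /block_count -[X in (_ <= X)%N](card_ord T) -sum1_card.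
by apply: leq_sum => j _; exact: leq_b1.
Qed.

Lemma cycle_rateE (R : realType) k (A : nat -> bmat L T) l :
  cycle_rate R k A l = (walk_count (mkseq A k) l)%:R / (k * T)%:R.
Proof.
rewrite /mkseq; have -> : iota 0 k = index_iota 0 k by rewrite /index_iota subn0.
rewrite /cycle_rate /walk_count big_map big_mkord mulrC natr_sum.
by congr (_ / _); apply: eq_bigr => i _; rewrite natr_sum.
Qed.

Lemma cycle_rate_bounds (R : realType) k (A : nat -> bmat L T) l : (0 < k)%N ->
  0 <= cycle_rate R k A l <= 1.
Proof.
move=> k_gt0; rewrite cycle_rateE divr_ge0 //= ler_pdivrMr ?ltr0n ?muln_gt0 ?k_gt0 //.
by rewrite mul1r ler_nat -{2}(size_mkseq A k) walk_count_le.
Qed.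

Lemma sg_cycle_closed k (A : nat -> bmat L T) :
  sg_cycle N k A -> cycle sg_rel (mkseq A k).
Proof. by case=> k_gt0 step Ak _; apply: mkseq_cycle => // i /step /asboolP. Qed.

Lemma sg_cycle_vertex k (A : nat -> bmat L T) B :
  sg_cycle N k A -> B \in mkseq A k -> sg_vertex N B.
Proof.
case=> _ step _ _ /mapP[i]; rewrite mem_iota add0n => /andP[_ /step edge] ->.
exact: sg_edge_vertex edge.
Qed.

Lemma zero_loop k (A : nat -> bmat L T) m : sg_cycle N k A ->
  path sg_rel Z (flatten (nseq m (mkseq A k)) ++ [:: Z]).
Proof.
move=> cyc; have [k_gt0 _ _ _] := cyc; rewrite cat_path /= andbT; apply/andP; split.
  apply: path_cycle_repeat; first exact: sg_cycle_closed.
  rewrite -(prednK k_gt0) /=; apply/asboolP/sg_edge_from_zero.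
  by apply: (sg_cycle_vertex cyc); rewrite -(prednK k_gt0) mem_head.
apply/asboolP/sg_edge_to_zero; move: (mem_last Z (flatten (nseq m (mkseq A k)))).
rewrite inE => /predU1P[-> | /flattenP[c /nseqP[-> _]]]; first exact: sg_vertex_zero.
exact: sg_cycle_vertex.
Qed.

Section Frame.
Variables (n : nat) (k : 'I_n -> nat) (A : 'I_n -> nat -> bmat L T) (m : 'I_n -> nat).

Definition zero_loops (s : seq 'I_n) : seq (bmat L T) :=
  flatten [seq flatten (nseq (m i) (mkseq (A i) (k i))) ++ [:: Z] | i <- s].

Definition frame : seq (bmat L T) := Z :: zero_loops (enum 'I_n).

Hypothesis cycs : forall i, sg_cycle N (k i) (A i).

Lemma zero_loops_path s : path sg_rel Z (zero_loops s) /\ last Z (zero_loops s) = Z.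
Proof.
elim: s => [|i s [IHp IHl]] //=.
by rewrite cat_path !last_cat /= zero_loop.
Qed.

Lemma frame_cycle : cycle sg_rel frame.
Proof.
have [loops back] := zero_loops_path (enum 'I_n).
rewrite /frame /= rcons_path loops back.
by apply/asboolP/sg_edge_to_zero/sg_vertex_zero.
Qed.

Lemma sum_frame (F : bmat L T -> nat) : (\sum_(B <- frame) F B =
  F Z + \sum_(i < n) (m i * \sum_(B <- mkseq (A i) (k i)) F B + F Z))%N.
Proof.
rewrite /frame /zero_loops big_cons big_flatten big_map big_enum /=; congr (_ + _)%N.
apply: eq_bigr => i _; rewrite big_cat big_seq1 big_flatten big_nseq /=.
by rewrite iter_addn_0 mulnC.
Qed.

Lemma frame_rate (R : realType) l :
  (walk_count frame l)%:R / (size frame * T)%:R =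
  (\sum_(i < n) (m i * k i)%:R * cycle_rate R (k i) (A i) l) /
    (1 + \sum_(i < n) (m i * k i).+1)%:R :> R.
Proof.
have k_gt0 i : (0 < k i)%N by case: (cycs i).
have countZ : block_count Z l = 0%N by rewrite /block_count big1 // => j _; rewrite ffunE.
have -> : walk_count frame l = (\sum_(i < n) m i * walk_count (mkseq (A i) (k i)) l)%N.
  by rewrite /walk_count sum_frame countZ; under eq_bigr do rewrite addn0.
have -> : size frame = (1 + \sum_(i < n) (m i * k i).+1)%N.
  by rewrite -sum1_size sum_frame; under eq_bigr do rewrite sum1_size size_mkseq addn1.
rewrite natrM invfM mulrA mulrAC natr_sum mulr_suml; congr (_ * _).
apply: eq_bigr => i _; rewrite cycle_rateE !natrM; field.
by rewrite !pnatr_eq0 -!lt0n k_gt0 T_gt0.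
Qed.

End Frame.

End Walks.

Lemma truncn_multiple (R : realType) (x : R) (k : nat) : 0 <= x -> (0 < k)%N ->
  ((Num.truncn (x / k%:R) * k)%:R <= x) /\ (x < (Num.truncn (x / k%:R) * k + k)%:R).
Proof.
move=> x_ge0 k_gt0; have k_gt0R : 0 < k%:R :> R by rewrite ltr0n.
rewrite -mulSnr !natrM -!ler_pdivlMr // -ltr_pdivrMr //; split.
  by rewrite truncn_le divr_ge0 // ltW.
exact: truncnS_gt.
Qed.

(* Convex weights lam can be approximated by repetition counts m of cycles of
   lengths k, uniformly in the cycle rates v in [0, 1]: take M large and
   m i * k i ~ lam i * M.  The extra 1 + n blocks are those of the zero block. *)
Lemma repetition_counts (R : realType) n (lam : 'I_n -> R) (k : 'I_n -> nat) (eps : R) :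
  (forall i, 0 <= lam i) -> \sum_(i < n) lam i = 1 -> (forall i, 0 < k i)%N -> 0 < eps ->
  exists m : 'I_n -> nat, forall v : 'I_n -> R, (forall i, 0 <= v i <= 1) ->
    \sum_(i < n) lam i * v i - eps <=
    (\sum_(i < n) (m i * k i)%:R * v i) / (1 + \sum_(i < n) (m i * k i).+1)%:R.
Proof.
move=> lam_ge0 lam_sum1 k_gt0 eps_gt0.
pose K := (\sum_(i < n) k i)%N.
pose M := (Num.truncn ((1 + n + K)%:R / eps)).+1.
have M_large : (1 + n + K)%:R < eps * M%:R :> R.
  by rewrite -ltr_pdivrMl // mulrC truncnS_gt.
exists (fun i => Num.truncn (lam i * M%:R / (k i)%:R)) => v v01.
set a := fun i => (Num.truncn (lam i * M%:R / (k i)%:R) * k i)%N.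
have a_bounds i : (a i)%:R <= lam i * M%:R < (a i + k i)%:R.
  by apply/andP; apply: truncn_multiple => //; rewrite mulr_ge0.
set Rv := \sum_(i < n) lam i * v i.
have Rv_le1 : Rv <= 1.
  by rewrite -lam_sum1; apply: ler_sum => i _; rewrite ler_piMr //; case/andP: (v01 i).
have len_le : (1 + \sum_(i < n) (a i).+1)%:R <= 1 + M%:R + n%:R :> R.
  rewrite natrD natr_sum -addrA lerD2l.
  have -> : M%:R + n%:R = \sum_(i < n) (lam i * M%:R + 1) :> R.
    by rewrite big_split /= -mulr_suml lam_sum1 mul1r sumr_const card_ord.
  apply: ler_sum => i _.
  by rewrite -addn1 natrD lerD2r; case/andP: (a_bounds i).
have count_ge : M%:R * Rv - K%:R <= \sum_(i < n) (a i)%:R * v i.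
  rewrite /Rv /K mulr_sumr natr_sum -sumrB; apply: ler_sum => i _.
  have [/andP[v_ge0 v_le1] /andP[_ a_gt]] := (v01 i, a_bounds i).
  have : 0 <= ((a i + k i)%:R - lam i * M%:R) * v i by rewrite mulr_ge0 // subr_ge0 ltW.
  have : 0 <= (k i)%:R * (1 - v i) :> R by rewrite mulr_ge0 // subr_ge0.
  rewrite natrD; nra.
have len_gt0 : 0 < (1 + \sum_(i < n) (a i).+1)%:R :> R by rewrite ltr0n.
rewrite ler_pdivlMr //; case: (lerP (Rv - eps) 0) => [Rv_small | Rv_large].
  apply: le_trans (mulr_le0_ge0 Rv_small (ltW len_gt0)) _.
  by apply: sumr_ge0 => i _; rewrite mulr_ge0 //; case/andP: (v01 i).
apply: le_trans count_ge; apply: le_trans (ler_wpM2l (ltW Rv_large) len_le) _.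
have : Rv * (1 + n%:R) <= 1 + n%:R by rewrite ler_piMl.
have : 0 <= eps * (1 + n%:R) by rewrite mulr_ge0 // ltW.
rewrite !natrD in M_large; nra.
Qed.

Theorem theorem7 (R : realType) (L : finType) (N : network L) (T : nat) :
  (0 < #|L|)%N -> binary_profile N -> (maxn (character N) 1 <= T)%N ->
  @graph_region R L N T `<=` @achievable_region R L N.
Proof.
move=> _ bin; rewrite geq_max => /andP[charT T_gt0].
move=> _ [n [lam [v [lam_ge0 lam_sum1 v_cycle ->]]]].
have /boolp.choice[kA kA_spec] : forall i, exists kA : nat * (nat -> bmat L T),
    sg_cycle N kA.1 kA.2 /\ v i = cycle_rate R kA.1 kA.2.
  by move=> i; have [k [A [cyc ->]]] := v_cycle i; exists (k, A).
pose k i := (kA i).1; pose A i := (kA i).2.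
have cycs i : sg_cycle N (k i) (A i) := (kA_spec i).1.
have k_gt0 i : (0 < k i)%N by case: (cycs i).
have -> : v = fun i => cycle_rate R (k i) (A i) by apply/funext => i; exact: (kA_spec i).2.
have rate01 i l : 0 <= cycle_rate R (k i) (A i) l <= 1 by exact: cycle_rate_bounds.
split=> [l | eps eps_gt0].
  by apply: sumr_ge0 => i _; rewrite mulr_ge0 //; case/andP: (rate01 i l).
have [m m_approx] := repetition_counts lam_ge0 lam_sum1 k_gt0 eps_gt0.
exists (walk_sched T_gt0 (frame k A m)) => l; eexists; split.
  by apply: walk_sched_rate => //; exact: frame_cycle.
by rewrite (frame_rate T_gt0 m cycs); apply: m_approx.
Qed.
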